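(* Let $F$ be a continuous function defined on a rectangle $R=[a,b]\times[c,d]$ ($a<b$, $c<d$) with values in $\mathbb{R}^m$, and let $\mathcal{C}(F_{|\partial R})$ be the Coons patch interpolating $F$ on $\partial R$, namely $$\mathcal{C}(F_{|\partial R})(s,t)=\tfrac{b-s}{b-a}F(a,t)+\tfrac{s-a}{b-a}F(b,t)+\tfrac{d-t}{d-c}F(s,c)+\tfrac{t-c}{d-c}F(s,d)-B(s,t),$$ where $B(s,t)=\tfrac{b-s}{b-a}\big(\tfrac{d-t}{d-c}F(a,c)+\tfrac{t-c}{d-c}F(a,d)\big)+\tfrac{s-a}{b-a}\big(\tfrac{d-t}{d-c}F(b,c)+\tfrac{t-c}{d-c}F(b,d)\big)$. Then for all $(s,t)\in(a,b)\times(c,d)$, $$F(s,t)-\mathcal{C}(F_{|\partial R})(s,t)=\frac{(s-a)(s-b)(t-c)(t-d)}{(b-a)(d-c)}\Big([b,s;d,t]F-[s,a;d,t]F+[s,a;t,c]F-[b,s;t,c]F\Big).$$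
   Context: For a bivariate function $F$ and reals $\sigma_1\ne\sigma_2$, $\tau_1\ne\tau_2$, the mixed second divided difference is $[\sigma_1,\sigma_2;\tau_1,\tau_2]F=\frac{F(\sigma_1,\tau_1)+F(\sigma_2,\tau_2)-F(\sigma_2,\tau_1)-F(\sigma_1,\tau_2)}{(\sigma_1-\sigma_2)(\tau_1-\tau_2)}$. *)

From HB Require Import structures.
From mathcomp Require Import all_boot all_order all_algebra.
From mathcomp Require Import all_classical all_reals all_analysis.
Set Implicit Arguments. Unset Strict Implicit. Unset Printing Implicit Defensive.
Import Order.TTheory GRing.Theory Num.Theory.
Local Open Scope ring_scope.

Definition mixed_dd (R : realType) (m : nat) (F : R -> R -> 'rV[R]_m)
  (s1 s2 t1 t2 : R) : 'rV[R]_m :=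
  ((s1 - s2) * (t1 - t2))^-1 *: (F s1 t1 + F s2 t2 - F s2 t1 - F s1 t2).

Definition coons (R : realType) (m : nat) (F : R -> R -> 'rV[R]_m)
  (a b c d : R) (s t : R) : 'rV[R]_m :=
  let B := ((b - s) / (b - a)) *: (((d - t) / (d - c)) *: F a c + ((t - c) / (d - c)) *: F a d)
         + ((s - a) / (b - a)) *: (((d - t) / (d - c)) *: F b c + ((t - c) / (d - c)) *: F b d) in
  ((b - s) / (b - a)) *: F a t + ((s - a) / (b - a)) *: F b t
  + ((d - t) / (d - c)) *: F s c + ((t - c) / (d - c)) *: F s d - B.

From HB Require Import structures.
From mathcomp Require Import all_boot all_order all_algebra.
From mathcomp Require Import all_classical all_reals all_analysis.
From mathcomp Require Import ring.
Import Order.TTheory GRing.Theory Num.Theory.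
Import numFieldNormedType.Exports.
Local Open Scope ring_scope.

(* Write P_s, P_t for linear interpolation in s between a, b and in t between
   c, d.  The Coons patch is P_s F + P_t F - P_s P_t F, so the remainder
   factors as (I - P_s)(I - P_t) F.  The one-variable remainder
   f s - P f s = (s - a)(s - b)/(b - a) ([b,s]f - [s,a]f) applied first in t
   and then in s yields differences of iterated divided differences, and an
   iterated divided difference is a mixed one. *)

Lemma subrACA (V : zmodType) (x y z w : V) : (x - y) - (z - w) = (x - z) - (y - w).
Proof. by rewrite !opprB addrACA [RHS]addrACA [- z + _]addrC. Qed.

Section DividedDifferences.
Variables (K : fieldType) (V : lmodType K).

Definition divdiff (f : K -> V) (x y : K) : V := (x - y)^-1 *: (f x - f y).

Definition lin_interp (f : K -> V) (a b s : K) : V :=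
  ((b - s) / (b - a)) *: f a + ((s - a) / (b - a)) *: f b.

Lemma divdiffB (f g : K -> V) (x y : K) :
  divdiff (fun z => f z - g z) x y = divdiff f x y - divdiff g x y.
Proof. by rewrite /divdiff -scalerBr subrACA. Qed.

Lemma divdiffZ (k : K) (f : K -> V) (x y : K) :
  divdiff (fun z => k *: f z) x y = k *: divdiff f x y.
Proof. by rewrite /divdiff -scalerBr !scalerA mulrC. Qed.

Lemma lin_interpB (f g : K -> V) (a b s : K) :
  lin_interp (fun z => f z - g z) a b s = lin_interp f a b s - lin_interp g a b s.
Proof. by rewrite /lin_interp !scalerBr opprD addrACA. Qed.

Lemma lin_interp_error (f : K -> V) (a b s : K) :
  a != b -> s != a -> s != b ->
  f s - lin_interp f a b s =
  ((s - a) * (s - b) / (b - a)) *: (divdiff f b s - divdiff f s a).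
Proof.
move=> ab sa sb.
have ba0 : b - a != 0 by rewrite subr_eq0 eq_sym.
have bs0 : b - s != 0 by rewrite subr_eq0 eq_sym.
have sa0 : s - a != 0 by rewrite subr_eq0.
rewrite /lin_interp /divdiff scalerBr !scalerA.
have -> : (s - a) * (s - b) / (b - a) / (b - s) = - ((s - a) / (b - a)).
  by field; rewrite ba0 bs0.
have -> : (s - a) * (s - b) / (b - a) / (s - a) = - ((b - s) / (b - a)).
  by field; rewrite ba0 sa0.
have fs_split : f s = ((b - s) / (b - a)) *: f s + ((s - a) / (b - a)) *: f s.
  by rewrite -scalerDl -mulrDl addrA subrK divff ?scale1r.
rewrite {1}fs_split !scaleNr !scalerBr.
by rewrite opprK opprB opprD addrACA addrC.
Qed.

End DividedDifferences.

Arguments divdiff {K V}.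
Arguments lin_interp {K V}.

Section CoonsPatch.
Variables (R : realType) (m : nat) (F : R -> R -> 'rV[R]_m).

Lemma mixed_ddE (s1 s2 t1 t2 : R) :
  mixed_dd F s1 s2 t1 t2 = divdiff (fun x => divdiff (F x) t1 t2) s1 s2.
Proof.
rewrite /mixed_dd /divdiff -scalerBr scalerA invfM opprB addrA.
by congr (_ *: _); rewrite [LHS]addrAC [F s1 t1 + _ - _]addrAC.
Qed.

Lemma coonsE (a b c d s t : R) :
  coons F a b c d s t = lin_interp (fun x => F x t) a b s + lin_interp (F s) c d t
                        - lin_interp (fun x => lin_interp (F x) c d t) a b s.
Proof. by rewrite /coons /lin_interp !addrA. Qed.

Lemma coons_remainder (a b c d s t : R) :
  a != b -> c != d -> s != a -> s != b -> t != c -> t != d ->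
  F s t - coons F a b c d s t =
  ((s - a) * (s - b) / (b - a) * ((t - c) * (t - d) / (d - c))) *:
    ((mixed_dd F b s d t - mixed_dd F b s t c)
     - (mixed_dd F s a d t - mixed_dd F s a t c)).
Proof.
move=> ab cd sa sb tc td.
pose G x := F x t - lin_interp (F x) c d t.
have G_error : F s t - coons F a b c d s t = G s - lin_interp G a b s.
  rewrite coonsE lin_interpB /G [_ + lin_interp (F s) c d t]addrC.
  by rewrite -[lin_interp (F s) c d t + _ - _]addrA opprD addrA.
have G_interp : G = fun x =>
    ((t - c) * (t - d) / (d - c)) *: (divdiff (F x) d t - divdiff (F x) t c).
  by apply: funext => x; rewrite /G lin_interp_error.
rewrite G_error lin_interp_error // G_interp !divdiffZ !divdiffB -!mixed_ddE.
by rewrite -scalerBr scalerA.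
Qed.

End CoonsPatch.

Theorem proposition1 (R : realType) (m : nat) (F : R -> R -> 'rV[R]_m)
  (a b c d : R) (hab : a < b) (hcd : c < d)
  (hF : forall i : 'I_m,
     {within (`[a, b] `*` `[c, d])%classic,
        continuous (fun p : R * R => F p.1 p.2 ord0 i)}%classic) :
  forall s t : R, a < s < b -> c < t < d ->
    F s t - coons F a b c d s t =
    ((s - a) * (s - b) * (t - c) * (t - d) / ((b - a) * (d - c))) *:
      (mixed_dd F b s d t - mixed_dd F s a d t + mixed_dd F s a t c
       - mixed_dd F b s t c).
Proof.
move=> s t /andP[has hsb] /andP[hct htd].
rewrite coons_remainder ?(lt_eqF hab, lt_eqF hcd, gt_eqF has, lt_eqF hsb,
  gt_eqF hct, lt_eqF htd) //; congr (_ *: _).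
  by rewrite mulrACA -invfM !mulrA.
by rewrite subrACA opprB addrA.
Qed.
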